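(* Let $m\in[\frac n3,\frac n2-1]$ be an integer and $\delta\in(0,2)$. Let $x$ be a random bit string in $\{0,1\}^n$ such that $\mathrm{DLB}(x)=2m+1$ and such that the bits $x_i$, $i\in[2m+3..n]$, are mutually independent, independent of the other bits, and uniformly distributed in $\{0,1\}$. Let $y$ be generated from $x$ by a unary unbiased variation operator $V$, and let $Y=(\mathrm{HLB}_\delta(y)-\mathrm{HLB}_\delta(x))\mathbb{1}_{\mathrm{DLB}(y)\ge\mathrm{DLB}(x)}$. Then $E[Y]\le\frac{16}{n^2}$.
   Context: Let $n$ be an even positive integer. For $x\in\{0,1\}^n$ consider the blocks $(x_{2\ell+1},x_{2\ell+2})$, $\ell=0,\dots,\frac n2-1$. If $x\neq(1,\dots,1)$, let $m$ be the smallest $\ell$ with $x_{2\ell+1}\neq 1$ or $x_{2\ell+2}\neq 1$, and define $\mathrm{DLB}(x)=2m+1$ if $x_{2m+1}+x_{2m+2}=0$ and $\mathrm{DLB}(x)=2m$ if $x_{2m+1}+x_{2m+2}=1$; set $\mathrm{DLB}(1,\dots,1)=n$. For $\delta\in(0,2)$, $\mathrm{HLB}_\delta(x)=2m$ if $\mathrm{DLB}(x)=2m+1$, $\mathrm{HLB}_\delta(x)=2m+2-\delta$ if $\mathrm{DLB}(x)=2m$ (for $m\in\{0,\dots,\frac n2-1\}$), and $\mathrm{HLB}_\delta(x)=n$ if $\mathrm{DLB}(x)=n$. A unary unbiased variation operator $V$ assigns to each $x\in\{0,1\}^n$ a probability distribution $V(x)$ on $\{0,1\}^n$ such that for all $x,y,z$,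 $\Pr[y=V(x)]=\Pr[y\oplus z=V(x\oplus z)]$, and for all permutations $\sigma$ of $[1..n]$, $\Pr[y=V(x)]=\Pr[\sigma(y)=V(\sigma(x))]$, where $\sigma(x)=(x_{\sigma(1)},\dots,x_{\sigma(n)})$. *)

(* Bit strings of length n are n.-tuple bool; the paper's bit
   x_i (1-based) is tnth x (i-1) (0-based index). *)
From HB Require Import structures.
From mathcomp Require Import all_boot all_order all_algebra all_fingroup.
Set Implicit Arguments. Unset Strict Implicit. Unset Printing Implicit Defensive.
Import Order.TTheory GRing.Theory Num.Theory.
Local Open Scope ring_scope.

Definition bits (n : nat) := (n.-tuple bool).

Definition xor_bits n (x z : bits n) : bits n := [tuple tnth x i (+) tnth z i | i < n].

Definition perm_bits n (s : {perm 'I_n}) (x : bits n) : bits n := [tuple tnth x (s i) | i < n].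

Definition bit n (x : bits n) (k : nat) : bool := nth false x k.

(* smallest block index l (0-based) such that block (x_{2l+1},x_{2l+2}) is not (1,1);
   equals n./2 if no such block *)
Definition first_block n (x : bits n) : nat :=
  find (fun l => ~~ (bit x (2 * l) && bit x (2 * l).+1)) (iota 0 n./2).

Definition DLB n (x : bits n) : nat :=
  let l := first_block x in
  if l == n./2 then n
  else if ~~ bit x (2 * l) && ~~ bit x (2 * l).+1 then (2 * l).+1 else 2 * l.

Definition HLB (R : numDomainType) n (delta : R) (x : bits n) : R :=
  let l := first_block x in
  if l == n./2 then n%:R
  else if ~~ bit x (2 * l) && ~~ bit x (2 * l).+1 then (2 * l)%:R
  else (2 * l + 2)%:R - delta.

(* V x y = Pr[y = V(x)] *)
Definition unary_unbiased (R : numDomainType) n (V : bits n -> bits n -> R) : Prop :=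
  [/\ (forall x y, 0 <= V x y),
      (forall x, \sum_(y : bits n) V x y = 1),
      (forall x y z, V x y = V (xor_bits x z) (xor_bits y z)) &
      (forall (s : {perm 'I_n}) x y, V x y = V (perm_bits s x) (perm_bits s y))].

Definition is_distr (R : numDomainType) n (p : bits n -> R) : Prop :=
  (forall x, 0 <= p x) /\ \sum_(x : bits n) p x = 1.

(* x and u agree on 0-based positions < k (paper: positions 1..k) *)
Definition agree_prefix n (k : nat) (x u : bits n) : bool :=
  [forall i : 'I_n, (i < k)%N ==> (tnth x i == tnth u i)].
(* x and w agree on 0-based positions >= k (paper: positions k+1..n) *)
Definition agree_suffix n (k : nat) (x w : bits n) : bool :=
  [forall i : 'I_n, (k <= i)%N ==> (tnth x i == tnth w i)].

(* If DLB x = 2m+1, then x starts with 1^{2m}00 and HLB x = 2m, so the gain Y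
   vanishes unless y starts with 1^{2m+2}, in which case Y = HLB y - 2m.  The
   hypotheses make x uniform on the strings with prefix 1^{2m}00.  For every y
   with prefix 1^{2m+2}, invariance of V under xor makes Pr[V(x) = y] equal
   to 2^{-(n-2m-2)} Q, where Q is the probability that V(0) has prefix
   0^{2m}11.  Invariance under permutations makes V(0) uniform within each
   weight class, and within weight r the strings with that prefix have
   relative frequency C(n-2m-2, r-2) / C(n, r) <= 2 / (n(n-1)) as n <= 3m.
   Finally, pairing the blocks 00 and 11 by a bit flip shows that HLB averages
   at most 2a+2 over the strings with prefix 1^{2a}; hence
   E[Y] <= 4 Q <= 8 / (n(n-1)) <= 16 / n^2. *)

From HB Require Import structures.
From mathcomp Require Import all_boot all_order all_algebra all_fingroup.
From mathcomp Require Import zify ring lra.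
Import Order.TTheory GRing.Theory Num.Theory.
Set Implicit Arguments. Unset Strict Implicit. Unset Printing Implicit Defensive.

Lemma leq_find_iota (p : pred nat) N l :
  l <= N -> (l <= find p (iota 0 N)) = all (predC p) (iota 0 l).
Proof.
move=> lN; rewrite -(subnKC lN) iotaD find_cat size_iota all_predC.
case: ifP => [p_l | _]; last by rewrite leq_addr.
by rewrite leqNgt -[X in _ < X](size_iota 0) -has_find p_l.
Qed.

Section Prefix.

Variable n : nat.
Implicit Types (x y z : bits n) (P Q : nat -> bool).

Definition prefix_is k P x : bool :=
  [forall i : 'I_n, (i < k) ==> (tnth x i == P i)].

Definition pattern P : bits n := [tuple P i | i < n].

Lemma prefix_isP k P x :
  k <= n -> reflect (forall i, i < k -> bit x i = P i) (prefix_is k P x).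
Proof.
move=> kn; apply: (iffP forallP) => [xP i ik | xP i].
  have iN : i < n by apply: leq_trans ik kn.
  by move/implyP/(_ ik)/eqP: (xP (Ordinal iN)); rewrite (tnth_nth false).
by apply/implyP => ik; rewrite (tnth_nth false) -/(bit x i) xP.
Qed.

Lemma prefix_isS k P x :
  k < n -> prefix_is k.+1 P x = prefix_is k P x && (bit x k == P k).
Proof.
move=> kn; have kn' := ltnW kn.
apply/(prefix_isP _ _ kn)/andP => [xP | [/(prefix_isP _ _ kn') xP /eqP xk] i].
  by split; [apply/(prefix_isP _ _ kn') => i ik; apply: xP; apply: ltnW | rewrite xP].
by rewrite ltnS leq_eqVlt => /orP [/eqP -> | /xP].
Qed.

Lemma eq_prefix_is k P Q :
  (forall i, i < k -> P i = Q i) -> prefix_is k P =1 prefix_is k Q.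
Proof. by move=> PQ x; apply: eq_forallb => i; case: ltnP => // /PQ ->. Qed.

Lemma prefix_is_xor k P Q x y : prefix_is k Q y ->
  prefix_is k P (xor_bits x y) = prefix_is k (fun i => P i (+) Q i) x.
Proof.
move=> /forallP yQ; apply: eq_forallb => i; case: ltnP => //= ik.
move/implyP/(_ ik)/eqP: (yQ i) => yi; rewrite tnth_mktuple yi.
by case: (tnth x i); case: (P i); case: (Q i).
Qed.

Lemma prefix_is_pattern k P : prefix_is k P (pattern P).
Proof. by apply/forallP => i; rewrite tnth_mktuple eqxx implybT. Qed.

Lemma prefix_is_agree k P x y :
  prefix_is k P x -> prefix_is k P y -> agree_prefix k x y.
Proof.
move=> /forallP xP /forallP yP; apply/forallP => i; apply/implyP => ik.
by move: (xP i) (yP i); rewrite ik => /eqP -> /eqP ->.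
Qed.

Lemma agree_prefix_suffix k x y :
  agree_prefix k x y && agree_suffix k x y = (x == y).
Proof.
apply/andP/eqP => [[/forallP pre /forallP suf] | ->]; last first.
  by split; apply/forallP => i; rewrite eqxx implybT.
apply: eq_from_tnth => i; case: (ltnP i k) => ik.
  by move/implyP/(_ ik)/eqP: (pre i).
by move/implyP/(_ ik)/eqP: (suf i).
Qed.

Lemma xor_bitsK z : involutive (fun x => xor_bits x z).
Proof. by move=> x; apply: eq_from_tnth => i; rewrite !tnth_mktuple addbK. Qed.

Lemma xor_bitsC x y : xor_bits x y = xor_bits y x.
Proof. by apply: eq_from_tnth => i; rewrite !tnth_mktuple addbC. Qed.

Lemma xor_bitsxx x : xor_bits x x = pattern (fun=> false).
Proof. by apply: eq_from_tnth => i; rewrite !tnth_mktuple addbb. Qed.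

Lemma reindex_xor_bits (R : Type) (idx : R) (op : Monoid.com_law idx) z
    (A : pred (bits n)) (F : bits n -> R) :
  \big[op/idx]_(x | A x) F x = \big[op/idx]_(x | A (xor_bits x z)) F (xor_bits x z).
Proof. exact: reindex_inj (inv_inj (xor_bitsK z)). Qed.

Lemma card_prefix_is k P Q :
  #|[pred x | prefix_is k P x]| = #|[pred x | prefix_is k Q x]|.
Proof.
rewrite -!sum1_card (reindex_xor_bits _ (pattern (fun i => P i (+) Q i))).
apply: eq_bigl => x; rewrite !inE (prefix_is_xor _ _ (prefix_is_pattern _ _)).
by apply: eq_prefix_is => i _; rewrite addKb.
Qed.

Lemma take_prefix_is k P x : k <= n -> prefix_is k P x -> take k x = mkseq P k.
Proof.
move=> kn /(prefix_isP _ _ kn) xP.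
apply: (@eq_from_nth _ false); first by rewrite size_takel ?size_tuple // size_mkseq.
move=> i; rewrite size_takel ?size_tuple // => ik.
by rewrite nth_take // nth_mkseq // -/(bit x i) xP.
Qed.

End Prefix.

Notation ones_prefix k := (prefix_is k (fun=> true)).
Notation zero_bits n := (pattern n (fun=> false)).

Section Blocks.

Variable n : nat.
Implicit Types x y : bits n.

Lemma first_block_le y : first_block y <= n./2.
Proof. by rewrite /first_block -[X in _ <= X](size_iota 0) find_size. Qed.

Lemma leq_first_block y l :
  l <= n./2 -> (l <= first_block y) = ones_prefix (2 * l) y.
Proof.
move=> ln; have l2n : 2 * l <= n by have := odd_double_half n; lia.
rewrite /first_block leq_find_iota //.
apply/allP/(prefix_isP _ _ l2n) => [blocks i il | ones j].
  have /andP [even odd] : bit y (2 * (i %/ 2)) && bit y (2 * (i %/ 2)).+1.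
    by rewrite -[_ && _]negbK; apply: blocks; rewrite mem_iota; lia.
  by have [-> | ->] : i = 2 * (i %/ 2) \/ i = (2 * (i %/ 2)).+1 by lia.
by rewrite mem_iota => /andP [_ jl] /=; rewrite !ones ?negbK //; lia.
Qed.

Lemma ones_prefix_block y l : 2 * l + 2 <= n ->
  ones_prefix (2 * l + 2) y = ones_prefix (2 * l) y && (bit y (2 * l) && bit y (2 * l).+1).
Proof.
by move=> ln; rewrite addn2 !prefix_isS ?eqb_id -?andbA //; lia.
Qed.

Lemma ones_prefix_zero_block y l : 2 * l + 2 <= n ->
  prefix_is (2 * l + 2) (fun i => i < 2 * l) y
  = ones_prefix (2 * l) y && (~~ bit y (2 * l) && ~~ bit y (2 * l).+1).
Proof.
move=> ln; rewrite addn2 !prefix_isS ?ltnn ?ltnNge ?leqnSn ?eqbF_neg -?andbA; try lia.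
by rewrite (eq_prefix_is (Q := fun=> true)).
Qed.

Hypothesis n_even : ~~ odd n.

Lemma DLB_first_block y : 2 * first_block y <= DLB y <= (2 * first_block y).+1.
Proof.
have := even_halfK n_even; rewrite /DLB; case: eqP => [-> | _]; first lia.
by case: ifP => _; lia.
Qed.

Lemma HLB_odd_DLB (R : numDomainType) (delta : R) y :
  odd (DLB y) -> HLB delta y = ((DLB y).-1%:R)%R.
Proof.
rewrite /DLB /HLB; case: eqP => _; first by rewrite (negbTE n_even).
by case: ifP => _ //=; rewrite oddM.
Qed.

Lemma DLB_odd_prefix m y :
  DLB y = (2 * m).+1 -> prefix_is (2 * m + 2) (fun i => i < 2 * m) y.
Proof.
move=> Dy; have n2 := even_halfK n_even.
have fb_m : first_block y = m by have := DLB_first_block y; lia.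
move: Dy; rewrite /DLB fb_m; case: eqP => [_ | m_ne]; first lia.
have mn : m < n./2 by have := first_block_le y; lia.
case: ifP => [/andP [b0 b1] _ | _]; last lia.
rewrite ones_prefix_zero_block; last lia.
by rewrite -(leq_first_block y (ltnW mn)) fb_m leqnn b0 b1.
Qed.

Lemma gain_of_odd_DLB (R : numDomainType) (delta : R) m x y :
  2 * m + 2 <= n -> DLB x = (2 * m).+1 ->
  (if (DLB x <= DLB y)%N then HLB delta y - HLB delta x else 0)%R
  = (if ones_prefix (2 * m + 2) y then HLB delta y - (2 * m)%:R else 0)%R.
Proof.
move=> mn Dx; have odd_Dx : odd (DLB x) by rewrite Dx oddS oddM.
rewrite (HLB_odd_DLB delta odd_Dx) Dx /=.
have n2 := even_halfK n_even.
have -> : 2 * m + 2 = 2 * m.+1 by lia.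
rewrite -leq_first_block; last lia.
have := DLB_first_block y; case: (leqP m.+1 (first_block y)) => fb_m bounds.
  by rewrite ifT //; lia.
case: leqP => D_ge //.
have Dy : DLB y = (2 * m).+1 by lia.
have odd_Dy : odd (DLB y) by rewrite Dy oddS oddM.
by rewrite (HLB_odd_DLB delta odd_Dy) Dy subrr.
Qed.

End Blocks.

Lemma sumr_const_pred (V : nmodType) (T : finType) (A : pred T) (c : V) :
  (\sum_(t | A t) c = c *+ #|[pred t | A t]|)%R.
Proof. by rewrite -sumr_const. Qed.

Section HLBSum.

Variables (n : nat) (R : realFieldType) (delta : R).
Hypothesis n_even : ~~ odd n.
Implicit Type y : bits n.
Local Open Scope ring_scope.

Lemma HLB_ones_prefix y : ones_prefix n y -> HLB delta y = n%:R.
Proof.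
move=> ones; suff fb : first_block y = n./2 by rewrite /HLB fb eqxx.
by apply/eqP; rewrite eqn_leq first_block_le leq_first_block // mul2n even_halfK.
Qed.

Lemma HLB_first_block y l : (l < n./2)%N -> ones_prefix (2 * l) y ->
  ~~ (bit y (2 * l) && bit y (2 * l).+1) ->
  HLB delta y = if ~~ bit y (2 * l) && ~~ bit y (2 * l).+1
                then (2 * l)%:R else (2 * l + 2)%:R - delta.
Proof.
move=> ln ones not11; suff fb : first_block y = l by rewrite /HLB fb ltn_eqF.
have n2 := even_halfK n_even.
apply/eqP; rewrite eqn_leq leq_first_block ?ones ?andbT ?(ltnW ln) //.
rewrite leqNgt leq_first_block // (_ : 2 * l.+1 = 2 * l + 2)%N; last lia.
by rewrite ones_prefix_block ?ones //; lia.
Qed.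

Hypothesis delta_gt0 : 0 < delta.

Lemma sum_HLB_ones_prefix_step a : (a < n./2)%N ->
  \sum_(y : bits n | ones_prefix (2 * a) y) (HLB delta y - (2 * a + 2)%:R)
  <= \sum_(y : bits n | ones_prefix (2 * a + 2) y) (HLB delta y - (2 * a + 2 + 2)%:R).
Proof.
move=> a_lt; have a2n : (2 * a + 2 <= n)%N by have := even_halfK n_even; lia.
pose N := #|[pred y : bits n | ones_prefix (2 * a + 2) y]|.
rewrite (bigID (fun y => bit y (2 * a) && bit y (2 * a).+1)) /=.
rewrite [X in _ + X](bigID (fun y => ~~ bit y (2 * a) && ~~ bit y (2 * a).+1)) /=.
set S := \sum_(y | ones_prefix (2 * a + 2) y) _.
have S11 : \sum_(y : bits n | ones_prefix (2 * a) y && (bit y (2 * a) && bit y (2 * a).+1))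
             (HLB delta y - (2 * a + 2)%:R) = S + 2%:R *+ N.
  rewrite (eq_bigl _ _ (fun y => esym (ones_prefix_block y a2n))).
  rewrite (eq_bigr (fun y => HLB delta y - (2 * a + 2 + 2)%:R + 2%:R)) => [|y _].
    by rewrite big_split sumr_const_pred.
  by rewrite !natrD; ring.
(* Flipping bits 2a and 2a+1 matches the blocks 00 with the blocks 11. *)
have S00 : \sum_(y : bits n | ones_prefix (2 * a) y && ~~ (bit y (2 * a) && bit y (2 * a).+1)
                    && (~~ bit y (2 * a) && ~~ bit y (2 * a).+1))
             (HLB delta y - (2 * a + 2)%:R) = - (2%:R *+ N).
  transitivity (\sum_(y : bits n | prefix_is (2 * a + 2) (fun i => i < 2 * a)%N y) (- 2%:R) : R).
    apply: eq_big => [y | y /andP [/andP [ones not11] zero]].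
      rewrite ones_prefix_zero_block //.
      by case: (bit y _); case: (bit y _); rewrite ?andbF ?andbT.
    by rewrite (HLB_first_block a_lt ones not11) zero natrD; ring.
  by rewrite sumr_const_pred mulNrn (card_prefix_is _ _ _ (fun=> true)).
have Smix : \sum_(y : bits n | ones_prefix (2 * a) y && ~~ (bit y (2 * a) && bit y (2 * a).+1)
                    && ~~ (~~ bit y (2 * a) && ~~ bit y (2 * a).+1))
             (HLB delta y - (2 * a + 2)%:R) <= 0.
  apply: sumr_le0 => y /andP [/andP [ones not11] mixed].
  rewrite (HLB_first_block a_lt ones not11) (negbTE mixed) /=.
  by rewrite addrAC subrr add0r oppr_le0 ltW.
by rewrite S11 S00; lra.
Qed.

Lemma sum_HLB_ones_prefix a : (a <= n./2)%N ->
  \sum_(y : bits n | ones_prefix (2 * a) y) (HLB delta y - (2 * a + 2)%:R) <= 0.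
Proof.
have n2 := even_halfK n_even.
move=> a_le; have [t] : exists t, (a + t = n./2)%N by exists (n./2 - a)%N; lia.
elim: t a {a_le} => [|t IH] a at_eq.
  have -> : (2 * a = n)%N by lia.
  by apply: sumr_le0 => y /HLB_ones_prefix ->; rewrite natrD; lra.
apply: le_trans (sum_HLB_ones_prefix_step _) _; first lia.
by have := IH a.+1 ltac:(lia); rewrite (_ : 2 * a.+1 = 2 * a + 2)%N; last lia.
Qed.

Lemma sum_HLB_gain_le m : (2 * m + 2 <= n)%N ->
  \sum_(y : bits n | ones_prefix (2 * m + 2) y) (HLB delta y - (2 * m)%:R)
  <= 4%:R * #|[pred y : bits n | ones_prefix (2 * m + 2) y]|%:R.
Proof.
move=> mn; have n2 := even_halfK n_even.
have hs := sum_HLB_ones_prefix (a := m.+1) ltac:(lia).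
rewrite (_ : 2 * m.+1 = 2 * m + 2)%N in hs; last lia.
rewrite (eq_bigr (fun y => HLB delta y - (2 * m + 2 + 2)%:R + 4%:R)) => [|y _].
  by rewrite big_split sumr_const_pred /= -[_ *+ #|_|]mulr_natl; lra.
by rewrite !natrD; ring.
Qed.

End HLBSum.

Definition weight n (d : bits n) : nat := count id d.

Lemma weight_le n (d : bits n) : weight d <= n.
Proof. by rewrite -[n in _ <= n](size_tuple d) count_size. Qed.

Lemma card_weight n r : #|[pred d : bits n | weight d == r]| = 'C(n, r).
Proof.
pose set_of (d : bits n) := [set i | tnth d i].
pose bits_of (S : {set 'I_n}) : bits n := [tuple i \in S | i < n].
have set_ofK : cancel set_of bits_of.
  by move=> d; apply: eq_from_tnth => i; rewrite tnth_mktuple inE.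
have bits_ofK : cancel bits_of set_of.
  by move=> S; apply/setP => i; rewrite inE tnth_mktuple.
have card_set_of d : #|set_of d| = weight d.
  rewrite /weight -(map_tnth_enum d) count_map cardE size_filter enumT.
  by apply: eq_count => i; rewrite /= inE.
transitivity #|[set S : {set 'I_n} | #|S| == r]|; last by rewrite card_draws card_ord.
rewrite -(card_image (can_inj set_ofK)).
apply: eq_card => S; rewrite -[S]bits_ofK mem_image ?inE ?card_set_of //.
exact: can_inj set_ofK.
Qed.

Lemma count_bool (P : pred bool) (s : seq bool) :
  count P s = P true * count id s + P false * (size s - count id s).
Proof.
elim: s => [|b s IH] /=; first by rewrite !muln0.
by rewrite IH; have := count_size id s; case: b; case: (P true); case: (P false) => /=; lia.
Qed.

Lemma weight_perm_bits n (d e : bits n) :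
  weight d = weight e -> exists s : {perm 'I_n}, e = perm_bits s d.
Proof.
move=> wde; have /tuple_permP [s es] : perm_eq (tval e) (tval d).
  apply/seq.permP => P; rewrite (count_bool P e) (count_bool P d) !size_tuple.
  by move: wde; rewrite /weight => ->.
by exists s; apply: val_inj.
Qed.

Lemma weight_prefix_is n k P (d : bits n) : k <= n -> prefix_is k P d ->
  weight d = count P (iota 0 k) + count id (drop k d).
Proof.
move=> kn dP; rewrite /weight -[in LHS](cat_take_drop k d) count_cat.
by rewrite (take_prefix_is kn dP) count_map.
Qed.

Lemma count_geq_iota j l : count (leq j) (iota 0 (j + l)) = l.
Proof.
rewrite iotaD count_cat add0n (eq_in_count (a2 := pred0)) ?count_pred0 => [|i]; last first.
  by rewrite mem_iota add0n => /andP [_ ij] /=; rewrite leqNgt ij.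
rewrite (eq_in_count (a2 := predT)) ?count_predT ?size_iota // => i.
by rewrite mem_iota => /andP [].
Qed.

Lemma card_prefix_weight n k P r : k <= n ->
  #|[pred d : bits n | prefix_is k P d & weight d == count P (iota 0 k) + r]| <= 'C(n - k, r).
Proof.
move=> kn; set A := [pred d | _].
have drop_inj : {in A &, injective (fun d : bits n => [tuple of drop k d])}.
  move=> d1 d2 /andP [d1P _] /andP [d2P _] /(congr1 val) /= eq_drop; apply: val_inj.
  rewrite /= -(cat_take_drop k d1) -(cat_take_drop k d2) eq_drop.
  by rewrite (take_prefix_is kn d1P) (take_prefix_is kn d2P).
rewrite -(card_in_image drop_inj) -card_weight.
apply/subset_leq_card/subsetP => _ /imageP [d /andP [dP /eqP wd] ->].
by rewrite inE /weight /= -(eqn_add2l (count P (iota 0 k))) -(weight_prefix_is kn dP) wd.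
Qed.

Lemma expn_mul_bin_le c L N s :
  0 < c -> c * L <= N -> c ^ s * 'C(L, s) <= 'C(N, s).
Proof.
move=> c_gt0 cLN; elim: s => [|s IH]; first by rewrite !bin0.
rewrite -(leq_pmul2l (ltn0Sn s)) mul_bin_left.
have -> : s.+1 * (c ^ s.+1 * 'C(L, s.+1)) = c * (L - s) * (c ^ s * 'C(L, s)).
  by rewrite mulnCA mul_bin_left expnS; ring.
by apply: leq_mul IH; rewrite mulnBr leq_sub // leq_pmull.
Qed.

Lemma bin_shift2_le n L s : 3 * L + 2 <= n ->
  'C(L, s) * (n * (n - 1)) <= 2 * 'C(n, s.+2).
Proof.
move=> Ln; rewrite -(leq_pmul2l (_ : 0 < s.+2 * s.+1)) //.
have -> : s.+2 * s.+1 * (2 * 'C(n, s.+2)) = 2 * (n * (n.-1 * 'C(n.-2, s))).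
  by rewrite mul_bin_diag [n * _]mulnCA mul_bin_diag; ring.
have sq_le : s.+2 * s.+1 <= 2 * 3 ^ s.
  elim: s {Ln} => [//|s IH]; rewrite expnS.
  have : s.+3 * s.+2 <= 3 * (s.+2 * s.+1) by nia.
  lia.
have bin_le : 3 ^ s * 'C(L, s) <= 'C(n.-2, s) by apply: expn_mul_bin_le; lia.
have -> : n - 1 = n.-1 by lia.
apply: leq_trans (_ : 'C(L, s) * (n * n.-1) * (2 * 3 ^ s) <= _).
  by rewrite mulnC leq_mul.
have -> : 'C(L, s) * (n * n.-1) * (2 * 3 ^ s) = 2 * (n * (n.-1 * (3 ^ s * 'C(L, s)))) by ring.
by rewrite !leq_mul2l bin_le !orbT.
Qed.

Lemma card_prefix_weight_ratio n k P r :
  k <= n -> count P (iota 0 k) = 2 -> 3 * (n - k) + 2 <= n ->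
  #|[pred d : bits n | prefix_is k P d & weight d == r]| * (n * (n - 1))
  <= 2 * #|[pred d : bits n | weight d == r]|.
Proof.
move=> kn cP nk; rewrite card_weight.
case: (ltnP r 2) => [r_lt | r_ge].
  rewrite eq_card0 // => d; rewrite !inE; apply/andP => -[dP /eqP wd].
  by have := weight_prefix_is kn dP; lia.
have [s ->] : exists s, r = s.+2 by exists (r - 2); lia.
apply: leq_trans (bin_shift2_le s nk); rewrite leq_mul2r.
by rewrite -add2n -cP card_prefix_weight ?orbT.
Qed.

Local Open Scope ring_scope.

Lemma sum_le_fibre_ratio (R : realFieldType) (T K : finType) (key : T -> K)
    (f : T -> R) (A : pred T) (c : R) :
  (forall t, 0 <= f t) -> (forall s t, key s = key t -> f s = f t) ->
  (forall j, #|[pred t | A t & key t == j]|%:R <= c * #|[pred t | key t == j]|%:R) ->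
  \sum_(t | A t) f t <= c * \sum_t f t.
Proof.
move=> f_ge0 f_key card_le.
rewrite (partition_big key predT) // [X in _ <= c * X](partition_big key predT) //.
rewrite mulr_sumr; apply: ler_sum => j _.
case: (pickP [pred t | key t == j]) => [t0 /eqP t0j | none]; last first.
  have no_j t : (key t == j) = false by exact: none.
  by rewrite !big_pred0 ?mulr0 // => t; rewrite no_j ?andbF.
have f_t0 t : key t == j -> f t = f t0 by move=> /eqP tj; apply: f_key; rewrite tj.
rewrite (eq_bigr (fun=> f t0)) => [|t /andP [_ /f_t0] //].
rewrite [X in _ <= c * X](eq_bigr (fun=> f t0)) => [|t /f_t0 //].
rewrite !sumr_const_pred -[f t0 *+ _]mulr_natl -[f t0 *+ _]mulr_natl mulrA.
by rewrite ler_wpM2r // card_le.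
Qed.

Lemma unbiased_weight_invariant (R : numDomainType) n (V : bits n -> bits n -> R) d e :
  unary_unbiased V -> weight d = weight e ->
  V (zero_bits n) d = V (zero_bits n) e.
Proof.
case=> _ _ _ V_perm /weight_perm_bits [s ->].
have zero_perm : perm_bits s (zero_bits n) = zero_bits n.
  by apply: eq_from_tnth => i; rewrite !tnth_mktuple.
by rewrite (V_perm s) zero_perm.
Qed.

Lemma unbiased_prefix_mass_le (R : realFieldType) n k P (V : bits n -> bits n -> R) :
  unary_unbiased V -> (k <= n)%N -> count P (iota 0 k) = 2 -> (3 * (n - k) + 2 <= n)%N ->
  \sum_(d | prefix_is k P d) V (zero_bits n) d <= 2%:R / (n * (n - 1))%:R.
Proof.
move=> V_unb kn cP nk; have [V_ge0 V_sum1 _ _] := V_unb.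
have nn1_gt0 : 0 < (n * (n - 1))%:R :> R by rewrite ltr0n muln_gt0; apply/andP; split; lia.
have keyE (d : bits n) (j : 'I_n.+1) : (inord (weight d) == j) = (weight d == j).
  by rewrite -val_eqE /= inordK // ltnS weight_le.
apply: le_trans (sum_le_fibre_ratio (key := fun d => inord (weight d) : 'I_n.+1)
                   (c := 2%:R / (n * (n - 1))%:R) _ _ _) _.
- exact: V_ge0.
- move=> d e /(congr1 val); rewrite /= !inordK ?ltnS ?weight_le //.
  exact: unbiased_weight_invariant.
- move=> j.
  have -> : #|[pred t : bits n | prefix_is k P t & inord (weight t) == j]|
            = #|[pred d : bits n | prefix_is k P d & weight d == j]|.
    by apply: eq_card => d; rewrite !inE keyE.
  have -> : #|[pred t : bits n | inord (weight t) == j]| = #|[pred d : bits n | weight d == j]|.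
    by apply: eq_card => d; rewrite !inE keyE.
  by rewrite mulrAC ler_pdivlMr // -!natrM ler_nat card_prefix_weight_ratio.
- by rewrite V_sum1 mulr1.
Qed.

Lemma prefix_distr_uniform (R : numFieldType) n k P (p : bits n -> R) :
  is_distr p -> (forall x, p x != 0 -> prefix_is k P x) ->
  (forall u w : bits n,
      \sum_(x | agree_prefix k x u && agree_suffix k x w) p x
      = (\sum_(x | agree_prefix k x u) p x) / 2%:R ^+ (n - k)) ->
  forall x, p x = if prefix_is k P x then 1 / 2%:R ^+ (n - k) else 0.
Proof.
move=> [_ p_sum1] p_supp p_indep x; case: ifP => [xP | xNP]; last first.
  by apply/eqP; apply: contraFT xNP => /p_supp.
have := p_indep x x; rewrite (eq_bigl _ _ (fun y => agree_prefix_suffix k y x)) big_pred1_eq.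
move=> ->; congr (_ / _); rewrite -p_sum1.
rewrite [RHS](bigID (fun y => agree_prefix k y x)) /= [X in _ = _ + X]big1 ?addr0 // => y.
by apply: contraNeq => /p_supp yP; apply: prefix_is_agree yP xP.
Qed.

Lemma sum_prefix_unbiased (R : numDomainType) n k P Q (V : bits n -> bits n -> R) y :
  unary_unbiased V -> prefix_is k Q y ->
  \sum_(x | prefix_is k P x) V x y
  = \sum_(d | prefix_is k (fun i => P i (+) Q i) d) V (zero_bits n) d.
Proof.
case=> _ _ V_xor _ yQ.
rewrite [RHS](reindex_xor_bits _ y); apply: eq_big => [x | x _].
  by rewrite (prefix_is_xor _ _ yQ); apply: eq_prefix_is => i _; rewrite addbK.
by rewrite (V_xor x y x) xor_bitsxx xor_bitsC.
Qed.

Lemma prefix_distr_card (R : numFieldType) n k P Q (p : bits n -> R) c :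
  is_distr p -> (forall x, p x = if prefix_is k P x then c else 0) ->
  c * #|[pred x : bits n | prefix_is k Q x]|%:R = 1.
Proof.
move=> [_ p_sum1] p_unif; rewrite -[RHS]p_sum1 (eq_bigr _ (fun x _ => p_unif x)) -big_mkcond.
by rewrite sumr_const_pred -[_ *+ #|_|]mulr_natr (card_prefix_is _ _ _ Q).
Qed.

Lemma expected_gain_eq (R : realFieldType) n m (delta : R) (p : bits n -> R) V c :
  ~~ odd n -> (2 * m + 2 <= n)%N -> unary_unbiased V ->
  (forall x, p x != 0 -> DLB x = (2 * m).+1) ->
  (forall x, p x = if prefix_is (2 * m + 2) (fun i => i < 2 * m)%N x then c else 0) ->
  \sum_x \sum_y p x * V x y * (if (DLB x <= DLB y)%N then HLB delta y - HLB delta x else 0)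
  = c * (\sum_(d | prefix_is (2 * m + 2) (leq (2 * m)) d) V (zero_bits n) d)
      * \sum_(y : bits n | ones_prefix (2 * m + 2) y) (HLB delta y - (2 * m)%:R).
Proof.
move=> n_even mn V_unb p_supp p_unif.
rewrite exchange_big [X in _ = _ * X]big_mkcond mulr_sumr; apply: eq_bigr => y _.
transitivity (\sum_x p x * V x y
                * if ones_prefix (2 * m + 2) y then HLB delta y - (2 * m)%:R else 0).
  apply: eq_bigr => x _; have [-> | /p_supp Dx] := eqVneq (p x) 0; first by rewrite !mul0r.
  by rewrite (gain_of_odd_DLB n_even delta y mn Dx).
rewrite -mulr_suml; case y_ones: (ones_prefix _ y); last by rewrite !mulr0.
congr (_ * _); rewrite (eq_bigr (fun x => if prefix_is (2 * m + 2) (fun i => i < 2 * m)%N x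
                                       then c * V x y else 0)) => [|x _]; last first.
  by rewrite p_unif; case: ifP; rewrite ?mul0r.
rewrite -big_mkcond -mulr_sumr (sum_prefix_unbiased _ V_unb y_ones); congr (_ * _).
by apply: eq_bigl => d; apply: eq_prefix_is => i _; rewrite addbT -leqNgt.
Qed.

Lemma four_mul_ratio_le (R : realFieldType) n :
  (2 <= n)%N -> 4%:R * (2%:R / (n * (n - 1))%:R) <= 16%:R / n%:R ^+ 2 :> R.
Proof.
move=> n_ge2; have n_ge2R : 2%:R <= n%:R :> R by rewrite ler_nat.
rewrite natrM natrB ?(ltnW n_ge2) //.
have nn1_gt0 : 0 < n%:R * (n%:R - 1%:R) :> R by apply: mulr_gt0; lra.
have n2_gt0 : 0 < n%:R ^+ 2 :> R by rewrite exprn_gt0 //; lra.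
by rewrite mulrA ler_pdivrMr // mulrAC ler_pdivlMr // expr2; nra.
Qed.

Unset Implicit Arguments.

Theorem lemma8 (R : realFieldType) (n m : nat) (delta : R)
  (p : bits n -> R) (V : bits n -> bits n -> R) :
  (0 < n)%N -> ~~ odd n ->
  (n <= 3 * m)%N -> (2 * m + 2 <= n)%N ->
  0 < delta -> delta < 2 ->
  is_distr p ->
  (forall x, p x != 0 -> DLB x = (2 * m).+1) ->
  (* bits x_i, i in [2m+3..n], are mutually independent, uniform, and
     independent of the other bits *)
  (forall u w : bits n,
      \sum_(x : bits n | agree_prefix (2 * m + 2) x u && agree_suffix (2 * m + 2) x w) p x
      = (\sum_(x : bits n | agree_prefix (2 * m + 2) x u) p x) / 2%:R ^+ (n - (2 * m + 2))) ->
  unary_unbiased V ->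
  \sum_(x : bits n) \sum_(y : bits n)
      p x * V x y * (if (DLB x <= DLB y)%N then HLB delta y - HLB delta x else 0)
  <= 16%:R / n%:R ^+ 2.
Proof.
(* [0 < n] follows from [2 * m + 2 <= n], and the bound holds for every [delta > 0]. *)
move=> _ n_even m_le k_le delta_gt0 _ p_distr p_supp p_indep V_unb.
have p_unif := prefix_distr_uniform p_distr
  (fun x px => DLB_odd_prefix n_even (p_supp x px)) p_indep.
rewrite (expected_gain_eq delta n_even k_le V_unb p_supp p_unif).
set c := 1 / _; set Q := \sum_(d | _) _; set G := \sum_(y | _) _.
have Q_ge0 : 0 <= Q by apply: sumr_ge0 => d _; case: V_unb.
have Q_le : Q <= 2%:R / (n * (n - 1))%:R.
  by apply: unbiased_prefix_mass_le; rewrite ?count_geq_iota //; lia.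
have cG_le : c * G <= 4%:R.
  have c_ones := prefix_distr_card (fun=> true) p_distr p_unif.
  apply: le_trans (_ : c * (4%:R * #|[pred y : bits n | ones_prefix (2 * m + 2) y]|%:R) <= _).
    by rewrite ler_wpM2l ?divr_ge0 ?exprn_ge0 // sum_HLB_gain_le.
  by rewrite mulrCA c_ones mulr1.
apply: (le_trans _ (four_mul_ratio_le R _)); last lia.
rewrite mulrAC; apply: le_trans (ler_wpM2r Q_ge0 cG_le) _.
by rewrite ler_wpM2l.
Qed.
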